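(* Let $d\ge2$, $\alpha\in(1,2)$, and let $\mu$ be a nondegenerate $\alpha$-stable distribution on $\mathbb{R}^d$ with no shift, spectral spherical measure $\lambda$, and characteristic exponent $|z|^\alpha V(u_z)$. For $z\in\mathbb{C}$ with $\Re z>0$ let $\varrho(z)=|z|^2/(2\Re z)$. Then $$0<\varrho_0:=\sup_{u\in\mathbb{S}^{d-1}}\varrho(V(u))<\frac{\lambda(\mathbb{S}^{d-1})}{1+\cos(\pi\alpha)}<\infty.$$ Moreover, for any $R>\varrho_0$, letting $V_*=R-V$, one has $\sup_{\mathbb{S}^{d-1}}|V_*|<R$.
   Context: Let $d\ge 2$, $\mathbb{S}^{d-1}$ the unit sphere, $u_z=z/|z|$. An $\alpha$-stable distribution ($\alpha\ne1$) with no shift has $\hat\mu(z)=\exp\{-|z|^\alpha V(u_z)\}$, $V(u)=\int_{\mathbb{S}^{d-1}}|\langle u,v\rangle|^\alpha[1-i\tan(\pi\alpha/2)\mathrm{sgn}\langle u,v\rangle]\lambda(dv)$, where $\lambda$ is a finite nonzero Borel measure on the sphere (the spectral spherical measure). Nondegenerate: the support of $\mu$ is not contained in a proper affine subspace (equivalently $\inf\Re V>0$). *)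

From HB Require Import structures.
From mathcomp Require Import all_boot all_order all_algebra.
From mathcomp Require Import all_classical all_reals all_analysis.
Set Implicit Arguments. Unset Strict Implicit. Unset Printing Implicit Defensive.
Import Order.TTheory GRing.Theory Num.Theory.
Local Open Scope classical_set_scope.
Local Open Scope ring_scope.

Section Defs.
Variables (R : realType) (d : nat).

(* R^d as row vectors, with a (trivial) pointed structure so that the
   library's generated sigma-algebra construction applies. *)
Definition vecR := 'rV[R]_d.
HB.instance Definition _ := Choice.on vecR.
HB.instance Definition _ := isPointed.Build vecR 0.

(* Borel sigma-algebra on R^d, generated by the coordinate projections
   (product Borel sigma-algebra, which equals Borel(R^d)). *)
Definition coord_gen : set (set vecR) :=
  [set A | exists (i : 'I_d) (B : set R),
      measurable B /\ A = (fun x : vecR => x ord0 i) @^-1` B].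

Definition Rd := g_sigma_algebraType coord_gen.

Definition ip (u v : vecR) : R := \sum_(i < d) u ord0 i * v ord0 i.

Definition sphere : set Rd := [set u | ip u u = 1].

(* V(u) = int_{S^{d-1}} |<u,v>|^a [1 - i tan(pi a/2) sgn<u,v>] lambda(dv),
   split into its real and imaginary parts *)
Definition VRe (lam : {measure set Rd -> \bar R}) (a : R) (u : Rd) : R :=
  Rintegral lam sphere (fun v : Rd => `|ip u v| `^ a).

Definition VIm (lam : {measure set Rd -> \bar R}) (a : R) (u : Rd) : R :=
  - tan (pi * a / 2) *
    Rintegral lam sphere (fun v : Rd => `|ip u v| `^ a * Num.sg (ip u v)).

(* rho(z) = |z|^2 / (2 Re z) for z = x + i y *)
Definition rho (x y : R) : R := (x ^+ 2 + y ^+ 2) / (2 * x).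

Definition cmod (x y : R) : R := Num.sqrt (x ^+ 2 + y ^+ 2).

End Defs.

(* Write V = A + iI with A(u) = int |<u,v>|^a dlam(v) and
   I(u) = -tan(pi a/2) B(u), B(u) = int |<u,v>|^a sgn<u,v> dlam(v).
   - Since |B| <= A, rho(A, I) <= A (1 + tan^2(pi a/2)) / 2 = A / (1 + cos(pi a)).
   - Nondegeneracy (A >= c > 0 on the sphere) gives a spectral gap
     A(u) <= L - c^2/(2L), L = lam(S^{d-1}): for a unit w orthogonal to u
     (here d >= 2 is used), Bessel's inequality gives pointwise
     eta |<w,v>|^a + |<u,v>|^a <= eta^2/2 + 1; integrate and take eta = c/L.
     Hence rho0 <= (L - c^2/(2L)) / (1 + cos(pi a)) < L / (1 + cos(pi a)).
   - For R > rho0, |R - V|^2 = R^2 - 2 A (R - rho(V)) <= R^2 - 2c (R - rho0) < R^2.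
   The file develops, in order: Euclidean geometry of R^d (Cauchy-Schwarz,
   Bessel, orthogonal unit vectors), measurability of the integrands,
   elementary real inequalities about powers, trigonometry, rho and cmod, the
   integral estimates for A and B, and finally the theorem. *)

From mathcomp Require Import all_boot all_order all_algebra.
From mathcomp Require Import all_classical all_reals all_analysis.
From mathcomp Require Import ring lra.
Import Order.TTheory GRing.Theory Num.Theory.
Set Implicit Arguments. Unset Strict Implicit.
Local Open Scope classical_set_scope.
Local Open Scope ring_scope.

Section EuclideanGeometry.
Variables (R : realType) (d : nat).
Implicit Types u v w : vecR R d.

Lemma ip_sym u v : ip u v = ip v u.
Proof. by apply: eq_bigr => i _; rewrite mulrC. Qed.

Lemma ipDl u v w : ip (u + v) w = ip u w + ip v w.
Proof. by rewrite /ip -big_split; apply: eq_bigr => i _; rewrite !mxE mulrDl. Qed.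

Lemma ipBl u v w : ip (u - v) w = ip u w - ip v w.
Proof. by rewrite /ip -sumrB; apply: eq_bigr => i _; rewrite !mxE mulrBl. Qed.

Lemma ipZl k u w : ip (k *: u) w = k * ip u w.
Proof. by rewrite /ip mulr_sumr; apply: eq_bigr => i _; rewrite !mxE mulrA. Qed.

Lemma ipDr u v w : ip w (u + v) = ip w u + ip w v.
Proof. by rewrite ip_sym ipDl !(ip_sym w). Qed.

Lemma ipBr u v w : ip w (u - v) = ip w u - ip w v.
Proof. by rewrite ip_sym ipBl !(ip_sym w). Qed.

Lemma ipZr k u w : ip w (k *: u) = k * ip w u.
Proof. by rewrite ip_sym ipZl ip_sym. Qed.

Lemma ip_ge0 u : 0 <= ip u u.
Proof. by apply: sumr_ge0 => i _; rewrite -expr2 sqr_ge0. Qed.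

Lemma ip_delta u (i : 'I_d) : ip u (delta_mx 0 i) = u ord0 i.
Proof.
rewrite /ip (bigD1 i) //= big1 ?addr0; first by rewrite mxE !eqxx mulr1.
by move=> j ji; rewrite mxE (negbTE ji) andbF mulr0.
Qed.

Lemma delta_on_sphere (i : 'I_d) : sphere (delta_mx 0 i : Rd R d).
Proof. by rewrite /sphere /= ip_delta mxE !eqxx. Qed.

(* Cauchy-Schwarz on the unit sphere, from |u -+ v|^2 >= 0. *)
Lemma norm_ip_sphere_le1 u v : ip u u = 1 -> ip v v = 1 -> `|ip u v| <= 1.
Proof.
move=> hu hv; have h1 := ip_ge0 (u - v); have h2 := ip_ge0 (u + v).
rewrite ipBl !ipBr hu hv (ip_sym v u) in h1.
rewrite ipDl !ipDr hu hv (ip_sym v u) in h2.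
by rewrite ler_norml; apply/andP; split; lra.
Qed.

(* Bessel's inequality for an orthonormal pair, from |v - <u,v>u - <w,v>w|^2 >= 0. *)
Lemma bessel2 u w v : ip u u = 1 -> ip w w = 1 -> ip u w = 0 ->
  ip u v ^+ 2 + ip w v ^+ 2 <= ip v v.
Proof.
move=> hu hw huw; set x := ip u v; set y := ip w v.
have := ip_ge0 (v - x *: u - y *: w).
rewrite !ipBl !ipZl !ipBr !ipZr hu hw huw (ip_sym w u) huw.
rewrite (ip_sym v u) (ip_sym v w) -/x -/y => h; nra.
Qed.

(* In dimension at least 2 every unit vector has a unit orthogonal vector:
   rotate its first two coordinates (p, q) to (q, -p), normalised. *)
Lemma orthogonal_unit_exists u : (2 <= d)%N -> ip u u = 1 ->
  exists w, ip w w = 1 /\ ip u w = 0.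
Proof.
move=> hd hu; have d_gt0 : (0 < d)%N by apply: leq_trans hd.
pose i0 : 'I_d := Ordinal d_gt0; pose i1 : 'I_d := Ordinal hd.
have i01 : i0 != i1 by [].
have ip_deltas i j : ip (delta_mx 0 i : vecR R d) (delta_mx 0 j) = (i == j)%:R.
  by rewrite ip_delta mxE eqxx /= eq_sym.
set p := u ord0 i0; set q := u ord0 i1.
have [pq0|pq_neq0] := eqVneq (p ^+ 2 + q ^+ 2) 0.
  exists (delta_mx 0 i0); rewrite ip_deltas eqxx ip_delta; split => //.
  have : p ^+ 2 = 0 by have := sqr_ge0 p; have := sqr_ge0 q; lra.
  by move/eqP; rewrite sqrf_eq0 => /eqP.
have pq_gt0 : 0 < p ^+ 2 + q ^+ 2 by rewrite lt_def pq_neq0 addr_ge0 ?sqr_ge0.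
set n := Num.sqrt (p ^+ 2 + q ^+ 2).
have n_neq0 : n != 0 by rewrite gt_eqF // sqrtr_gt0.
have n2 : n ^+ 2 = p ^+ 2 + q ^+ 2 by rewrite sqr_sqrtr // ltW.
exists ((q / n) *: delta_mx 0 i0 - (p / n) *: delta_mx 0 i1).
rewrite !ipBl !ipBr !ipZl !ipZr !ip_deltas !ip_delta eqxx (negbTE i01).
rewrite eq_sym (negbTE i01) -/p -/q; split; last by field.
rewrite !mulr1 !mulr0 !subr0 sub0r opprK.
have -> : q / n * (q / n) + p / n * (p / n) = (p ^+ 2 + q ^+ 2) / n ^+ 2 by field.
by rewrite -n2 divff // expf_neq0.
Qed.

End EuclideanGeometry.

Section Measurability.
Variables (R : realType) (d : nat).

Lemma measurable_coord (i : 'I_d) :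
  measurable_fun setT (fun x : Rd R d => x ord0 i).
Proof. by move=> _ B mB; rewrite setTI; apply: sub_sigma_algebra; exists i, B. Qed.

Lemma measurable_ip (u : vecR R d) : measurable_fun setT (fun x : Rd R d => ip u x).
Proof.
apply: measurable_sum => i.
by apply: measurable_realfun.measurable_funM; [exact: measurable_cst|exact: measurable_coord].
Qed.

Lemma measurable_sphere : measurable (@sphere R d).
Proof.
have mipp : measurable_fun setT (fun x : Rd R d => ip x x).
  by apply: measurable_sum => i; apply: measurable_realfun.measurable_funM;
    exact: measurable_coord.
by have := mipp measurableT [set 1] (measurable_set1 1); rewrite setTI.
Qed.

Lemma measurable_sg_ip (u : vecR R d) :
  measurable_fun setT (fun x : Rd R d => Num.sg (ip u x)).
Proof.
have -> : (fun x : Rd R d => Num.sg (ip u x)) =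
    (fun x => if 0 < ip u x then 1 else if ip u x < 0 then -1 else 0).
  by apply: funext => x; case: (sgrP (ip u x)).
apply: measurable_fun_ifT; last apply: measurable_fun_ifT;
  try exact: measurable_cst.
- by apply: measurable_realfun.measurable_fun_ltr => //; exact: measurable_ip.
- by apply: measurable_realfun.measurable_fun_ltr => //; exact: measurable_ip.
Qed.

End Measurability.

Section RealInequalities.
Variable R : realType.
Implicit Types a c r s t A I M Rr : R.

Lemma powR_le_self r a : 0 <= r <= 1 -> 1 <= a -> r `^ a <= r.
Proof.
move=> /andP[r_ge0 r_le1] a_ge1; have [->|r_neq0] := eqVneq r 0.
  by rewrite powR0 // gt_eqF // (lt_le_trans ltr01).
by apply: ge1r_powR => //; rewrite r_le1 andbT lt_def r_neq0.
Qed.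

(* Pointwise form of the spectral gap: if s^2 + r^2 <= 1 then
   eta r^a + s^a <= eta r + s <= eta^2/2 + 1, by 2 eta r <= eta^2 + r^2
   and 2 s <= 1 + s^2. *)
Lemma weighted_pow_le s r eta a : 0 <= s <= 1 -> 0 <= r <= 1 ->
  s ^+ 2 + r ^+ 2 <= 1 -> 0 < eta -> 1 <= a ->
  eta * r `^ a + s `^ a <= eta ^+ 2 / 2 + 1.
Proof.
move=> s01 r01 sr_le1 eta_gt0 a_ge1.
have := powR_le_self s01 a_ge1; have := powR_le_self r01 a_ge1.
have := sqr_ge0 (eta - r); have := sqr_ge0 (1 - s).
move: s01 r01 => /andP[? ?] /andP[? ?] ? ? r_pow s_pow.
have : eta * r `^ a <= eta * r by rewrite ler_pM2l.
nra.
Qed.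

(* For 1 < a < 2 the half-angle pi a / 2 lies in (pi/2, pi), whence
   1 + cos(pi a) = 2 cos^2(pi a / 2) > 0 and 1 + tan^2 = 1 / cos^2. *)
Lemma one_add_cos_facts a : 1 < a -> a < 2 ->
  0 < 1 + cos (pi * a) /\
  (1 + tan (pi * a / 2) ^+ 2) / 2 = 1 / (1 + cos (pi * a)).
Proof.
move=> a_gt1 a_lt2; set x := pi * a / 2; have pi_gt0 := @pi_gt0 R.
have cos_lt0 : cos x < 0.
  have -> : x = pi * (a - 1) / 2 + pi / 2 by rewrite /x; field.
  rewrite cosDpihalf oppr_lt0; apply: sin_gt0_pihalf; apply/andP; split.
    by apply: divr_gt0 => //; apply: mulr_gt0 => //; lra.
  by rewrite ltr_pM2r ?invr_gt0 //; nra.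
have cos_double : 1 + cos (pi * a) = 2 * cos x ^+ 2.
  have -> : pi * a = x + x by rewrite /x; field.
  by rewrite cosD; have := cos2Dsin2 x; rewrite !expr2; lra.
have cos_neq0 : cos x != 0 by rewrite lt_eqF.
have cos2_gt0 : 0 < cos x ^+ 2 by rewrite exprn_even_gt0.
split; first by rewrite cos_double; nra.
by rewrite -cos2_tan2 // cos_double; field.
Qed.

Lemma rho_gt0 A I : 0 < A -> 0 < rho A I.
Proof.
move=> A_gt0; rewrite /rho divr_gt0 ?mulr_gt0 //.
by rewrite ltr_pwDl ?sqr_ge0 ?exprn_gt0.
Qed.

Lemma rho_le A I t : 0 < A -> I ^+ 2 <= t ^+ 2 * A ^+ 2 ->
  rho A I <= A * ((1 + t ^+ 2) / 2).
Proof.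
move=> A_gt0 I_le; rewrite /rho ler_pdivrMr ?mulr_gt0 //.
rewrite !expr2 in I_le *; nra.
Qed.

(* |Rr - (A + iI)|^2 = Rr^2 - 2 A (Rr - rho(A, I)); a lower bound c on A and
   an upper bound r0 < Rr on rho therefore bound |Rr - (A + iI)| uniformly. *)
Lemma cmod_shift_le c A I r0 Rr : 0 < c -> c <= A -> rho A I <= r0 -> r0 < Rr ->
  cmod (Rr - A) (- I) <= Num.sqrt (Rr ^+ 2 - 2 * c * (Rr - r0)).
Proof.
move=> c_gt0 c_le_A rho_le r0_lt.
have rhoE : rho A I * (2 * A) = A ^+ 2 + I ^+ 2.
  by rewrite /rho; field; rewrite gt_eqF //; lra.
have shrink : c * (Rr - r0) <= A * (Rr - rho A I) by apply: ler_pM; lra.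
have bound : (Rr - A) ^+ 2 + (- I) ^+ 2 <= Rr ^+ 2 - 2 * c * (Rr - r0).
  by rewrite !expr2 in rhoE *; nra.
rewrite /cmod ler_sqrt //; apply: le_trans bound.
by rewrite addr_ge0 ?sqr_ge0.
Qed.

Lemma sqrt_shift_lt c r0 Rr : 0 < c -> r0 < Rr -> 0 < Rr ->
  Num.sqrt (Rr ^+ 2 - 2 * c * (Rr - r0)) < Rr.
Proof.
move=> c_gt0 r0_lt Rr_gt0.
rewrite -[ltRHS](@ger0_norm _ Rr) ?ltW // -sqrtr_sqr ltr_sqrt ?exprn_gt0 //.
have gain : 0 < c * (Rr - r0) by apply: mulr_gt0; lra.
lra.
Qed.

Lemma sup_image_le (T : Type) (S : set T) (f : T -> R) M : S !=set0 ->
  (forall x, S x -> f x <= M) -> has_ubound (f @` S) /\ sup (f @` S) <= M.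
Proof.
move=> [x Sx] f_le; have ub : ubound (f @` S) M by move=> _ [y Sy <-]; exact: f_le.
by split; [exists M | apply: ge_sup => //; exists (f x), x].
Qed.

End RealInequalities.

Section SpectralIntegrals.
Variables (R : realType) (d : nat) (a : R)
  (lam : {finite_measure set (Rd R d) -> \bar R}).
Hypotheses (hd : (2 <= d)%N) (ha1 : 1 < a) (lam_gt0 : (0 < lam (@sphere R d))%E).

Local Notation S := (@sphere R d).

Definition kern (u v : Rd R d) : R := `|ip u v| `^ a.

Definition mass : R := fine (lam S).

Lemma lam_sphere_lt_oo : (lam S < +oo)%E.
Proof. by rewrite -ge0_fin_numE //; apply: fin_num_measure; exact: measurable_sphere. Qed.

Lemma mass_gt0 : 0 < mass.
Proof.
by move: lam_gt0; rewrite /mass -[lam S]fineK ?lte_fin //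
  ge0_fin_numE ?lam_sphere_lt_oo.
Qed.

Lemma kern01 u v : S u -> S v -> 0 <= kern u v <= 1.
Proof.
move=> Su Sv; have ip_le1 := norm_ip_sphere_le1 Su Sv.
rewrite /kern powR_ge0 /= (le_trans _ ip_le1) // powR_le_self ?normr_ge0 //.
exact: ltW.
Qed.

Lemma measurable_kern u : measurable_fun setT (kern u).
Proof.
apply: (measurableT_comp (measurable_realfun.measurable_powR a)).
apply: (measurableT_comp (@measurable_realfun.normr_measurable R setT)).
exact: measurable_ip.
Qed.

Lemma bounded_integrable (h : Rd R d -> R) K : measurable_fun setT h ->
  (forall v, S v -> `|h v| <= K) -> lam.-integrable S (EFin \o h).
Proof.
move=> mh h_le; apply: measurable_bounded_integrable.
- exact: measurable_sphere.
- exact: lam_sphere_lt_oo.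
- exact: measurable_funS mh.
exists K; split => [|M K_lt v Sv]; first exact: num_real.
by apply: le_trans (h_le _ Sv) _; apply: ltW.
Qed.

Lemma integrable_kern u : S u -> lam.-integrable S (EFin \o kern u).
Proof.
move=> Su; apply: (@bounded_integrable _ 1 (measurable_kern u)) => v Sv.
by have /andP[k_ge0 k_le1] := kern01 Su Sv; rewrite ger0_norm.
Qed.

Lemma integrable_cst k : lam.-integrable S (EFin \o (fun=> k)).
Proof. by apply: (@bounded_integrable _ `|k|) => //; exact: measurable_cst. Qed.

Lemma weighted_VRe_le u w eta : S u -> S w -> ip u w = 0 -> 0 < eta ->
  eta * VRe lam a w + VRe lam a u <= (eta ^+ 2 / 2 + 1) * mass.
Proof.
move=> Su Sw uw eta_gt0; have mS := @measurable_sphere R d.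
have int_eta_w : lam.-integrable S (EFin \o (fun v => eta * kern w v)).
  exact: (integrableZl mS eta (integrable_kern Sw)).
have int_sum : lam.-integrable S (EFin \o (fun v => eta * kern w v + kern u v)).
  exact: (integrableD mS int_eta_w (integrable_kern Su)).
rewrite -(Rintegral_cst lam mS) /VRe -RintegralZl ?integrable_kern //.
rewrite -RintegralD ?integrable_kern //.
apply: le_Rintegral => //; first exact: integrable_cst.
move=> v Sv; have := bessel2 v Su Sw uw; rewrite Sv => uvw.
have := norm_ip_sphere_le1 Su Sv; have := norm_ip_sphere_le1 Sw Sv.
move=> wv_le1 uv_le1; apply: weighted_pow_le; rewrite ?normr_ge0 //.
- by rewrite !real_normK ?num_real.
- exact: ltW.
Qed.

(* Nondegeneracy forces a gap below the total mass: choosing an orthogonal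
   unit w and eta = c / mass in weighted_VRe_le. *)
Lemma VRe_gap c u : 0 < c -> (forall w, S w -> c <= VRe lam a w) -> S u ->
  VRe lam a u <= mass - c ^+ 2 / (2 * mass).
Proof.
move=> c_gt0 c_le Su; have [w [Sw uw]] := orthogonal_unit_exists hd Su.
have m_gt0 := mass_gt0; set eta := c / mass.
have eta_gt0 : 0 < eta by rewrite divr_gt0.
have := weighted_VRe_le Su Sw uw eta_gt0.
have : eta * c <= eta * VRe lam a w by rewrite ler_pM2l // c_le.
have -> : mass - c ^+ 2 / (2 * mass) = (eta ^+ 2 / 2 + 1) * mass - eta * c.
  by rewrite /eta; field; rewrite gt_eqF.
lra.
Qed.

Lemma odd_part_le u : S u ->
  `|Rintegral lam S (fun v => kern u v * Num.sg (ip u v))| <= VRe lam a u.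
Proof.
move=> Su; set g := fun v => kern u v * Num.sg (ip u v).
have mg : measurable_fun setT g.
  by apply: measurable_realfun.measurable_funM;
    [exact: measurable_kern|exact: measurable_sg_ip].
have g_le v : S v -> `|g v| <= kern u v.
  move=> Sv; have /andP[k_ge0 _] := kern01 Su Sv.
  rewrite /g normrM normr_sg (ger0_norm k_ge0).
  by case: (_ != 0); rewrite ?mulr1 ?mulr0.
have g_le1 v : S v -> `|g v| <= 1.
  by move=> Sv; apply: le_trans (g_le v Sv) _; case/andP: (kern01 Su Sv).
have ig : lam.-integrable S (EFin \o g) by exact: bounded_integrable g_le1.
apply: (le_trans (le_normr_Rintegral (@measurable_sphere R d) ig)).
apply: le_Rintegral => //; [exact: measurable_sphere| |exact: integrable_kern].
apply: (bounded_integrable (K := 1)) => [|v Sv]; last by rewrite normr_id g_le1.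
exact: (measurableT_comp (@measurable_realfun.normr_measurable R setT) mg).
Qed.

(* The bound on rho(V(u)): |Im V| <= |tan(pi a/2)| Re V by odd_part_le,
   Re V <= mass - c^2/(2 mass) by VRe_gap, and (1 + tan^2)/2 = 1/(1 + cos(pi a)). *)
Lemma rhoV_le c u : a < 2 -> 0 < c -> (forall w, S w -> c <= VRe lam a w) -> S u ->
  rho (VRe lam a u) (VIm lam a u) <= (mass - c ^+ 2 / (2 * mass)) / (1 + cos (pi * a)).
Proof.
move=> ha2 c_gt0 c_le Su; have [_ tanE] := one_add_cos_facts ha1 ha2.
set M := mass - _.
have -> : M / (1 + cos (pi * a)) = M * ((1 + tan (pi * a / 2) ^+ 2) / 2).
  by rewrite tanE mul1r.
have A_gt0 : 0 < VRe lam a u by apply: lt_le_trans c_gt0 (c_le u Su).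
apply: le_trans (rho_le (t := tan (pi * a / 2)) A_gt0 _) _; last first.
  by rewrite ler_wpM2r ?divr_ge0 ?addr_ge0 ?sqr_ge0 // VRe_gap.
have := odd_part_le Su; rewrite /VIm ler_norml exprMn sqrrN => /andP[? ?].
by rewrite ler_wpM2l ?sqr_ge0 //; nra.
Qed.

End SpectralIntegrals.

Theorem lemma5p3 (R : realType) (d : nat) (a : R)
  (lam : {finite_measure set (Rd R d) -> \bar R})
  (hd : (2 <= d)%N) (ha1 : 1 < a) (ha2 : a < 2)
  (hsupp : lam (~` @sphere R d) = 0%E)
  (hnz : (0 < lam (@sphere R d))%E)
  (hnondeg : exists2 c : R, 0 < c &
      forall u, @sphere R d u -> c <= VRe lam a u) :
  let rho0 := sup [set rho (VRe lam a u) (VIm lam a u) | u in @sphere R d] in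
  has_ubound [set rho (VRe lam a u) (VIm lam a u) | u in @sphere R d] /\
  0 < rho0 /\
  rho0 < fine (lam (@sphere R d)) / (1 + cos (pi * a)) /\
  forall Rr : R, rho0 < Rr ->
    let Vstar_abs := [set cmod (Rr - VRe lam a u) (- VIm lam a u)
                      | u in @sphere R d] in
    has_ubound Vstar_abs /\ sup Vstar_abs < Rr.
Proof.
move=> rho0; have [c c_gt0 c_le] := hnondeg.
have [k_gt0 _] := one_add_cos_facts ha1 ha2.
have m_gt0 := mass_gt0 hnz.
have Se0 := delta_on_sphere R (Ordinal (ltnW hd)).
have S_neq0 : (@sphere R d) !=set0 by eexists; exact: Se0.
have [rho_ub rho0_le] := sup_image_le S_neq0
  (fun u Su => rhoV_le hd ha1 hnz ha2 c_gt0 c_le Su).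
have rho_le_rho0 u : sphere u -> rho (VRe lam a u) (VIm lam a u) <= rho0.
  by move=> Su; apply: ub_le_sup rho_ub _ _; exists u.
have rho0_gt0 : 0 < rho0.
  apply: lt_le_trans (rho_le_rho0 _ Se0); apply: rho_gt0.
  exact: lt_le_trans c_gt0 (c_le _ Se0).
split=> //; split=> //; split.
  apply: le_lt_trans rho0_le _; rewrite ltr_pM2r ?invr_gt0 // ltrBlDr ltrDl.
  by rewrite divr_gt0 ?exprn_gt0 ?mulr_gt0.
move=> Rr rho0_lt Vs.
have Rr_gt0 : 0 < Rr := lt_trans rho0_gt0 rho0_lt.
have [Vs_ub Vs_le] := sup_image_le S_neq0
  (fun u Su => cmod_shift_le c_gt0 (c_le u Su) (rho_le_rho0 u Su) rho0_lt).
by split=> //; apply: le_lt_trans Vs_le (sqrt_shift_lt c_gt0 rho0_lt Rr_gt0).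
Qed.
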